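(* Let $f\colon\Delta\to\Delta$ be a Bernoulli Young tower with $\mathbb P_{\mathcal A}(h_{\mathcal A}=n)=\theta(1-\theta)^{n-1}$ for all $n\ge1$, for some $0<\theta<1$, and let $D,\mathbb P_D$, $g\colon D\to\Delta$ and $D_k(x)$ be as in the context. Fix $p>2$ and let $$\delta_{k,p}=\int_D\sup_{x'\in D_k(x)}d^p(g(x),g(x'))\,d\mathbb P_D(x).$$ Then there exist $C_\delta>0$ and $0<\theta_\delta<1$ such that $\delta_{k,p}\le C_\delta\theta_\delta^{|k|}$ for all $k\in\mathbb Z$.
   Context: Bernoulli Young tower: given an at most countable probability space $(\mathcal{A},\mathbb{P}_{\mathcal A})$, an integrable $h_{\mathcal A}\colon\mathcal A\to\mathbb N$ and $0<\xi<1$, let $(X,\mathbb P_X)=(\mathcal A^{\mathbb N},\mathbb P_{\mathcal A}^{\mathbb N})$ with left shift $f_X$, $h(a_0,a_1,\dots)=h_{\mathcal A}(a_0)$, $\Delta=\{(x,\ell)\in X\times\mathbb Z:0\le\ell<h(x)\}$, $f(x,\ell)=(x,\ell+1)$ if $\ell<h(x)-1$ and $f(x,\ell)=(f_Xx,0)$ if $\ell=h(x)-1$. On $X$, $d(x,y)=\xi^{s(x,y)}$ with $s((a_j),(b_j))=\inf\{j\ge0:a_j\ne b_j\}$; on $\Delta$, $d((x,k),(y,j))=1$ if $k\ne j$ and $=d(x,y)$ if $k=j$. Construction: let $(\Omega,\mathbb P_\Omega)$ be a probability space carrying random variables $A_n\colon\Omega\to\mathcal A$, $n\ge1$, with $\mathbb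 P(A_n=a)=\mathbb P_{\mathcal A}(a)/\mathbb P_{\mathcal A}(h_{\mathcal A}=n)$ if $h_{\mathcal A}(a)=n$ and $0$ otherwise. Let $Z=\{0,1\}$ with $\mathbb P_Z(1)=\theta$, $\mathbb P_Z(0)=1-\theta$, $D=\Omega^{\mathbb Z}\times Z^{\mathbb Z}$ with $\mathbb P_D=\mathbb P_\Omega^{\mathbb Z}\times\mathbb P_Z^{\mathbb Z}$. For $x=((\omega_j)_{j\in\mathbb Z},(z_j)_{j\in\mathbb Z})\in D$ let $t_0(x)=\sup\{k\le0:z_k=1\}$ and $t_n(x)=\inf\{k>t_{n-1}(x):z_k=1\}$ for $n\ge1$ (finite a.s.). Define $g(x)=(y,-t_0(x))$ with $y=(A_{t_1-t_0}(\omega_{t_0}),A_{t_2-t_1}(\omega_{t_1}),\dots)\in X$. For $k\in\mathbb Z$, $D_k(x)$ is the set of $x'=((\omega'_j),(z'_j))\in D$ with $\omega'_j=\omega_j$ and $z'_j=z_j$ for all $j\ne k$. *)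

From HB Require Import structures.
From mathcomp Require Import all_boot all_order all_algebra.
From mathcomp Require Import all_classical all_reals all_analysis.
Set Implicit Arguments. Unset Strict Implicit. Unset Printing Implicit Defensive.
Import Order.TTheory GRing.Theory Num.Theory.
Local Open Scope classical_set_scope.
Local Open Scope ring_scope.

Section Bernoulli.
Variables (R : realType) (A : countType) (Omega : Type).

Definition seqX := nat -> A.

Definition dX (xi : R) (x y : seqX) : R :=
  match pselect (exists j : nat, `[< x j <> y j >]) with
  | left H => xi ^+ (ex_minn H)
  | right _ => 0
  end.

(* Metric on the tower: points are pairs (x, level). *)
Definition dDelta (xi : R) (u v : seqX * nat) : R :=
  if u.2 != v.2 then 1 else dX xi u.1 v.1.

(* D = Omega^Z x Z^Z, with Z = {0,1} encoded as bool (true = 1). *)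
Definition Dt := ((int -> Omega) * (int -> bool))%type.

(* t_0(x) = sup{k <= 0 : z_k = 1}; default 0 on the (null) event where it is undefined *)
Definition t0 (z : int -> bool) : int :=
  match pselect (exists m : nat, `[< z (- (m%:Z)) = true >]) with
  | left H => - ((ex_minn H)%:Z)
  | right _ => 0
  end.

(* next one after t: inf{k > t : z_k = 1}; default t+1 on the (null) event where undefined *)
Definition tnext (z : int -> bool) (t : int) : int :=
  match pselect (exists m : nat, `[< z (t + (m.+1)%:Z) = true >]) with
  | left H => t + ((ex_minn H).+1)%:Z
  | right _ => t + 1
  end.

Fixpoint tn (z : int -> bool) (n : nat) : int :=
  match n with
  | 0 => t0 z
  | n'.+1 => tnext z (tn z n')
  end.

(* g(x) = (y, -t_0(x)),  y_i = A_{t_{i+1} - t_i}(omega_{t_i}) ;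
   An n : Omega -> A is the random variable A_n (n >= 1). *)
Definition gmap (An : nat -> Omega -> A) (x : Dt) : seqX * nat :=
  let z := x.2 in
  ((fun i : nat => An `|tn z i.+1 - tn z i|%N (x.1 (tn z i))), `|t0 z|%N).

Definition Dk (k : int) (x : Dt) : set Dt :=
  [set x' | forall j : int, j != k -> x'.1 j = x.1 j /\ x'.2 j = x.2 j].

End Bernoulli.

Definition Dgen (d : measure_display) (Omega : measurableType d) : set (set (Dt Omega)) :=
  [set S | exists (j : int) (B : set Omega), measurable B /\
              S = (fun x : Dt Omega => x.1 j) @^-1` B]
  `|` [set S | exists (j : int) (C : set bool),
              S = (fun x : Dt Omega => x.2 j) @^-1` C].

Definition Dtype (d : measure_display) (Omega : measurableType d) :=
  g_sigma_algebraType (@Dgen d Omega).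

Definition PZ (R : realType) (theta : R) (C : set bool) : R :=
  (if `[< C true >] then theta else 0) + (if `[< C false >] then 1 - theta else 0).

(* P_D is the product measure P_Omega^Z x P_Z^Z: it agrees with the product
   of the marginals on every finite-dimensional measurable cylinder. *)
Definition is_product_measure (R : realType) (d : measure_display)
  (Omega : measurableType d) (POm : probability Omega R) (theta : R)
  (PD : probability (Dtype Omega) R) : Prop :=
  forall (J : seq int) (B : int -> set Omega) (C : int -> set bool),
    uniq J -> (forall j, j \in J -> measurable (B j)) ->
    PD [set x : Dtype Omega | forall j, j \in J -> B j (x.1 j) /\ C j (x.2 j)]
    = (\prod_(j <- J) (POm (B j) * (PZ theta (C j))%:E))%E.

Definition PA_h (R : realType) (A : countType) (pA : A -> R) (hA : A -> nat) (n : nat) : R :=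
  fine (\esum_(a in [set a | hA a = n]) (pA a)%:E)%E.

From HB Require Import structures.
From mathcomp Require Import all_boot all_order all_algebra.
From mathcomp Require Import all_classical all_reals all_analysis.
From mathcomp Require Import zify ring lra measurable_realfun.
Import Order.TTheory GRing.Theory Num.Theory.
Local Open Scope classical_set_scope.
Local Open Scope ring_scope.
Set Implicit Arguments. Unset Strict Implicit. Unset Printing Implicit Defensive.

(* Changing a configuration at one site k moves g only through the renewal
   structure. For k <= 0, g(x') = g(x) as soon as there is a renewal in (k, 0],
   and the complementary event has probability (1 - theta)^|k|. For k > 0 the
   level of g(x) is unchanged and every renewal in (0, k) adds one more common
   symbol, so d(g x, g x') <= xi^N with N the number of renewals in (0, k);
   the renewal indicators being i.i.d. Bernoulli(theta), E xi^N is
   (theta xi + 1 - theta)^(k-1). Since d <= 1 and p >= 1, d^p <= d, and both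
   cases decay geometrically at rate theta xi + 1 - theta. *)

Section RenewalTimes.
Variable z : int -> bool.

Lemma t0_le0 : t0 z <= 0.
Proof. by rewrite /t0; case: pselect => // H; lia. Qed.

Lemma t0_last j : t0 z < j -> j <= 0 -> z j = false.
Proof.
rewrite /t0; case: pselect => [H|H] tj j0; apply/negP => zj.
  case: ex_minnP tj => m _ minm tj; have := minm `|j|%N.
  by rewrite asboolE (_ : - `|j|%:Z = j); [move/(_ zj); lia | lia].
by apply: H; exists `|j|%N; rewrite asboolE (_ : - `|j|%:Z = j) //; lia.
Qed.

Lemma z_t0 j : z j -> j <= 0 -> z (t0 z).
Proof.
move=> zj j0; rewrite /t0; case: pselect => [H|H].
  by case: ex_minnP => m; rewrite asboolE.
by exfalso; apply: H; exists `|j|%N; rewrite asboolE (_ : - `|j|%:Z = j) //; lia.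
Qed.

Lemma t0_ge j : z j -> j <= 0 -> j <= t0 z.
Proof. by move=> zj j0; rewrite leNgt; apply/negP => /t0_last/(_ j0); rewrite zj. Qed.

Lemma t0_char s : s <= 0 -> z s -> (forall j, s < j -> j <= 0 -> z j = false) ->
  t0 z = s.
Proof.
move=> s0 zs free; apply/eqP; rewrite eq_le t0_ge // andbT leNgt; apply/negP => st.
by have := z_t0 zs s0; rewrite free // t0_le0.
Qed.

Lemma tnext_gt t : t < tnext z t.
Proof. by rewrite /tnext; case: pselect => // H; lia. Qed.

Lemma tnext_first t j : t < j -> j < tnext z t -> z j = false.
Proof.
rewrite /tnext; case: pselect => [H|H] tj jt; last lia.
apply/negP => zj; case: ex_minnP jt => m _ minm jt; have := minm `|(j - t - 1)%R|%N.
by rewrite asboolE (_ : t + (`|(j - t - 1)%R|%N.+1)%:Z = j); [move/(_ zj); lia | lia].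
Qed.

Lemma z_tnext t j : t < j -> z j -> z (tnext z t).
Proof.
move=> tj zj; rewrite /tnext; case: pselect => [H|H].
  by case: ex_minnP => m; rewrite asboolE.
exfalso; apply: H; exists `|(j - t - 1)%R|%N.
by rewrite asboolE (_ : t + (`|(j - t - 1)%R|%N.+1)%:Z = j) //; lia.
Qed.

Lemma tnext_le t j : t < j -> z j -> tnext z t <= j.
Proof.
by move=> tj zj; rewrite leNgt; apply/negP => /(tnext_first tj); rewrite zj.
Qed.

Lemma tnext_char t r : t < r -> z r -> (forall j, t < j -> j < r -> z j = false) ->
  tnext z t = r.
Proof.
move=> tr zr free; apply/eqP; rewrite eq_le tnext_le //= leNgt; apply/negP => rt.
by have := z_tnext tr zr; rewrite free // tnext_gt.
Qed.

Lemma tn_le m n : (m <= n)%N -> tn z m <= tn z n.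
Proof.
move=> /subnK <-; elim: (n - m)%N => [|i IH] //=.
exact: le_trans IH (ltW (tnext_gt _)).
Qed.

End RenewalTimes.

Lemma eq_t0 (z z' : int -> bool) : (forall j, j <= 0 -> z j = z' j) -> t0 z = t0 z'.
Proof.
move=> E; have E' (m : nat) : z (- m%:Z) = z' (- m%:Z) by apply: E; lia.
rewrite /t0; case: pselect => [H|H]; case: pselect => [H'|H'] //.
- by congr (- (_ : nat)%:Z); apply: eq_ex_minn => m; rewrite E'.
- by exfalso; apply: H'; case: H => m; rewrite E' => ?; exists m.
- by exfalso; apply: H; case: H' => m; rewrite -E' => ?; exists m.
Qed.

Lemma eq_tnext (z z' : int -> bool) t :
  (forall j, t < j -> z j = z' j) -> tnext z t = tnext z' t.
Proof.
move=> E; have E' (m : nat) : z (t + m.+1%:Z) = z' (t + m.+1%:Z) by apply: E; lia.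
rewrite /tnext; case: pselect => [H|H]; case: pselect => [H'|H'] //.
- by congr (_ + ((_ : nat).+1)%:Z); apply: eq_ex_minn => m; rewrite E'.
- by exfalso; apply: H'; case: H => m; rewrite E' => ?; exists m.
- by exfalso; apply: H; case: H' => m; rewrite -E' => ?; exists m.
Qed.

Lemma tnext_off_site (z z' : int -> bool) k t j :
  (forall i, i != k -> z' i = z i) -> t < j -> j < k -> z j ->
  tnext z' t = tnext z t.
Proof.
move=> zz' tj jk zj; have rj := tnext_le tj zj.
apply: tnext_char; first exact: tnext_gt.
  by rewrite zz'; [exact: z_tnext zj | apply/eqP; lia].
move=> i ti ir; rewrite zz'; [exact: tnext_first ir | apply/eqP; lia].
Qed.

Section TowerMetric.
Variables (R : realType) (A : countType) (xi : R).
Hypotheses (xi_ge0 : 0 <= xi) (xi_le1 : xi <= 1).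

Lemma dX_ge0 (y y' : seqX A) : 0 <= dX xi y y'.
Proof. by rewrite /dX; case: pselect => // H; exact: exprn_ge0. Qed.

Lemma dX_le1 (y y' : seqX A) : dX xi y y' <= 1.
Proof. by rewrite /dX; case: pselect => // H; exact: exprn_ile1. Qed.

Lemma dXxx (y : seqX A) : dX xi y y = 0.
Proof. by rewrite /dX; case: pselect => // H; exfalso; case: H => j /asboolP. Qed.

Lemma dX_le_prefix (y y' : seqX A) j :
  (forall i, (i < j)%N -> y i = y' i) -> dX xi y y' <= xi ^+ j.
Proof.
move=> prefix; rewrite /dX; case: pselect => [H|_]; last exact: exprn_ge0.
case: ex_minnP => m /asboolP ym _; apply: ler_wiXn2l => //.
by rewrite leqNgt; apply/negP => /prefix.
Qed.

Lemma dDelta_ge0 (u v : seqX A * nat) : 0 <= dDelta xi u v.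
Proof. by rewrite /dDelta; case: ifP => // _; exact: dX_ge0. Qed.

Lemma dDelta_le1 (u v : seqX A * nat) : dDelta xi u v <= 1.
Proof. by rewrite /dDelta; case: ifP => // _; exact: dX_le1. Qed.

Lemma dDeltaxx (u : seqX A * nat) : dDelta xi u u = 0.
Proof. by rewrite /dDelta eqxx dXxx. Qed.

End TowerMetric.

Definition renewal_weight (R : realType) (xi : R) (z : int -> bool) (t : int) (n : nat) : R :=
  \prod_(i < n) (if z (t + i.+1%:Z) then xi else 1).

Section RenewalWeight.
Variables (R : realType) (xi : R) (z : int -> bool).

Lemma renewal_weightD t a b :
  renewal_weight xi z t (a + b) = renewal_weight xi z t a * renewal_weight xi z (t + a%:Z) b.
Proof.
rewrite /renewal_weight big_split_ord /=; congr (_ * _); apply: eq_bigr => i _.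
by congr (if z _ then _ else _); rewrite /=; lia.
Qed.

Lemma renewal_weight_free t n : (forall j, t < j -> j <= t + n%:Z -> z j = false) ->
  renewal_weight xi z t n = 1.
Proof. by move=> free; apply: big1 => i _; rewrite free //; have := ltn_ord i; lia. Qed.

Lemma renewal_weightS t n :
  renewal_weight xi z t n.+1 = (if z (t + 1) then xi else 1) * renewal_weight xi z (t + 1) n.
Proof. by rewrite -add1n renewal_weightD /renewal_weight big_ord1. Qed.

End RenewalWeight.

Section SingleSiteChange.
Variables (A : countType) (Omega : Type).
Variables (An : nat -> Omega -> A) (k : int) (x x' : Dt Omega).
Hypothesis x'_Dk : Dk k x x'.

Lemma omega_Dk j : j != k -> x'.1 j = x.1 j.
Proof. by move=> /x'_Dk []. Qed.

Lemma z_Dk j : j != k -> x'.2 j = x.2 j.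
Proof. by move=> /x'_Dk []. Qed.

Lemma gmap_prefix_Dk j : tn x.2 j < k ->
  (forall i, (i <= j)%N -> tn x'.2 i = tn x.2 i) ->
  forall i, (i < j)%N -> (gmap An x).1 i = (gmap An x').1 i.
Proof.
move=> tjk agree i ij /=.
rewrite -[tnext x'.2 _]/(tn x'.2 i.+1) (agree i.+1 ij) (agree i (ltnW ij)) /=.
by rewrite omega_Dk //; apply/eqP; have := tn_le x.2 (ltnW ij); lia.
Qed.

(* With a renewal in [(k, 0]], [g] only reads coordinates to the right of [k]. *)
Lemma gmap_Dk_eq : k <= 0 -> (exists j, k < j /\ j <= 0 /\ x.2 j) ->
  gmap An x' = gmap An x.
Proof.
move=> k0 [j [kj [j0 zj]]].
have right_of_k i : k < i -> i != k by move=> ki; apply/eqP; lia.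
have jt0 : j <= t0 x.2 := t0_ge zj j0.
have t0_eq : t0 x'.2 = t0 x.2.
  apply: t0_char; first exact: t0_le0.
    by rewrite z_Dk; [exact: z_t0 zj j0 | apply: right_of_k; lia].
  by move=> i ti i0; rewrite z_Dk; [exact: t0_last | apply: right_of_k; lia].
have tn_eq n : tn x'.2 n = tn x.2 n.
  elim: n => [|n IH] //=; rewrite IH; apply: eq_tnext => i ti.
  by rewrite z_Dk //; apply: right_of_k; have := tn_le x.2 (leq0n n); rewrite /=; lia.
rewrite /gmap t0_eq; congr (_, _); apply: funext => i.
by rewrite !tn_eq omega_Dk //; apply: right_of_k; have := tn_le x.2 (leq0n i); rewrite /=; lia.
Qed.

Section Contraction.
Variables (R : realType) (xi : R).
Hypotheses (xi_ge0 : 0 <= xi) (xi_le1 : xi <= 1).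

(* Induction on the distance from [t_j] to [k]: a renewal of [x] strictly between
   them is also a renewal of [x'], and yields one more common symbol. *)
Lemma dX_gmap_Dk_le j : tn x.2 j < k ->
  (forall i, (i <= j)%N -> tn x'.2 i = tn x.2 i) ->
  dX xi (gmap An x).1 (gmap An x').1 <=
    xi ^+ j * renewal_weight xi x.2 (tn x.2 j) `|k - tn x.2 j|%N.-1.
Proof.
move: (leqnn `|k - tn x.2 j|%N); move: {2}`|k - tn x.2 j|%N => N.
elim: N j => [|N IH] j hN tjk agree; first lia.
set t := tn x.2 j.
have [[j0 [tj0 [j0k zj0]]]|no_renewal] :=
  pselect (exists j0, t < j0 /\ j0 < k /\ x.2 j0); last first.
  rewrite renewal_weight_free ?mulr1; first exact/dX_le_prefix/gmap_prefix_Dk.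
  by move=> i ti ik; apply/negP => zi; apply: no_renewal; exists i; split; lia.
set r := tnext x.2 t.
have tr : t < r := tnext_gt x.2 t.
have rj0 : r <= j0 := tnext_le tj0 zj0.
have agree' i : (i <= j.+1)%N -> tn x'.2 i = tn x.2 i.
  rewrite leq_eqVlt => /orP [/eqP ->|]; last exact: agree.
  by rewrite /= agree // (tnext_off_site z_Dk tj0 j0k zj0).
have weight_split : renewal_weight xi x.2 t `|k - t|%N.-1 =
    xi * renewal_weight xi x.2 r `|k - r|%N.-1.
  rewrite (_ : `|k - t|%N.-1 = (`|r - t|%N.-1 + (`|k - r|%N.-1).+1)%N); last lia.
  rewrite renewal_weightD renewal_weight_free ?mul1r; last first.
    by move=> i ti ir; apply: (tnext_first ti); rewrite -/r; lia.
  by rewrite renewal_weightS (_ : t + _ + 1 = r) ?(z_tnext tj0 zj0) //; lia.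
have dist_rk : (`|k - r|%N <= N)%N by lia.
have rk : r < k by lia.
by rewrite weight_split mulrA -exprSr; exact: IH j.+1 dist_rk rk agree'.
Qed.

Lemma dDelta_gmap_Dk_le : 0 < k ->
  dDelta xi (gmap An x) (gmap An x') <= renewal_weight xi x.2 0 `|k|%N.-1.
Proof.
move=> k0; have t0x_le0 := t0_le0 x.2.
have t0_eq : t0 x'.2 = t0 x.2 by apply: eq_t0 => j j0; rewrite z_Dk //; apply/eqP; lia.
rewrite /dDelta /= t0_eq eqxx /=.
apply: le_trans (dX_gmap_Dk_le (j := 0) _ _) _ => /=; first lia.
  by move=> i; rewrite leqn0 => /eqP ->.
rewrite expr0 mul1r (_ : `|k - t0 x.2|%N.-1 = (`|t0 x.2| + `|k|.-1)%N); last lia.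
rewrite renewal_weightD renewal_weight_free ?mul1r.
  by rewrite (_ : t0 x.2 + `|t0 x.2|%:Z = 0) //; lia.
by move=> j tj j0; apply: t0_last; lia.
Qed.

End Contraction.

End SingleSiteChange.

Lemma powR_le_self (R : realType) (c p : R) : 0 <= c -> c <= 1 -> 1 <= p -> c `^ p <= c.
Proof.
move=> c0 c1 p1; have [->|cn0] := eqVneq c 0.
  by rewrite powR0 //; apply: contraTneq p1 => ->; rewrite ler10.
by apply: ge1r_powR => //; rewrite c1 andbT lt_neqAle eq_sym cn0.
Qed.

(* No measurability is required: both integrals are suprema over simple
   functions below the integrand. *)
Lemma ge0_le_integralT (d : measure_display) (T : measurableType d) (R : realType)
  (mu : {measure set T -> \bar R}) (f g : T -> \bar R) :
  (forall x, (0 <= f x)%E) -> (forall x, (f x <= g x)%E) ->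
  (\int[mu]_(x in [set: T]) f x <= \int[mu]_(x in [set: T]) g x)%E.
Proof.
move=> f0 fg; have g0 x : (0 <= g x)%E by apply: le_trans (f0 x) (fg x).
rewrite !ge0_integralE //; apply: ereal_sup_le => _ [h hf <-]; exists h => //= x.
by apply: le_trans (hf x) _; rewrite /patch; case: ifP => // _; exact: fg.
Qed.

Section RenewalCylinders.
Variables (R : realType) (d : measure_display) (Omega : measurableType d).
Variables (POm : probability Omega R) (theta : R) (PD : probability (Dtype Omega) R).
Hypothesis PD_prod : is_product_measure POm theta PD.
Variables (n : nat) (phi : 'I_n -> int).

Definition renewal_cylinder (s : {ffun 'I_n -> bool}) : set (Dtype Omega) :=
  [set x | forall i, x.2 (phi i) = s i].

Lemma measurable_renewal_cylinder s : measurable (renewal_cylinder s).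
Proof.
rewrite (_ : renewal_cylinder s =
    \bigcap_(i in [set: 'I_n]) ((fun x : Dtype Omega => x.2 (phi i)) @^-1` [set s i])).
  apply: fin_bigcap_measurable; first exact: finite_finset.
  by move=> i _; apply: sub_gen_smallest; right; exists (phi i), [set s i].
by apply/seteqP; split => x /= H i; [move=> _|]; exact: H.
Qed.

Hypothesis phi_inj : injective phi.

Lemma PD_renewal_cylinder s :
  PD (renewal_cylinder s) = (\prod_(i < n) (if s i then theta else 1 - theta))%:E.
Proof.
pose C j := [set b : bool | forall i, phi i = j -> b = s i].
have := @PD_prod (map phi (index_enum 'I_n)) (fun _ => setT) C.
rewrite map_inj_uniq // index_enum_uniq => /(_ isT (fun _ _ => measurableT)).
rewrite (_ : [set x | _] = renewal_cylinder s); last first.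
  apply/seteqP; split => x /= H.
  - by move=> i; have [_ /(_ i erefl) ->] := H (phi i) (map_f _ (mem_index_enum i)).
  - by move=> j /mapP [i0 _ ->]; split => // i /phi_inj ->; exact: H.
move=> ->; rewrite big_map -prodEFin; apply: eq_bigr => i _.
rewrite probability_setT mul1e (_ : C (phi i) = [set b | b = s i]); last first.
  by apply/seteqP; split => b /= H; [exact: H | move=> i0 /phi_inj ->].
rewrite /PZ; case: (s i).
- by rewrite asboolT // asboolF // addr0.
- by rewrite asboolF // asboolT // add0r.
Qed.

(* Under [PD] the sites [phi i] carry independent Bernoulli([theta]) variables. *)
Lemma integral_renewal_product (a b : R) : 0 <= a -> 0 <= b ->
  (\int[PD]_(x in [set: Dtype Omega])
     (\prod_(i < n) (if x.2 (phi i) then a else b))%:E =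
   ((theta * a + (1 - theta) * b) ^+ n)%:E)%E.
Proof.
move=> a0 b0; pose F (s : {ffun 'I_n -> bool}) := \prod_(i < n) (if s i then a else b).
have F0 s : 0 <= F s by apply: prodr_ge0 => i _; case: ifP.
have mind s : measurable_fun [set: Dtype Omega]
    (fun x => ((\1_(renewal_cylinder s) x : R))%:E).
  by apply/measurable_EFinP/measurable_indic; exact: measurable_renewal_cylinder.
have split_cyl x : (\prod_(i < n) (if x.2 (phi i) then a else b))%:E =
    (\sum_(s : {ffun 'I_n -> bool}) ((F s)%:E * (\1_(renewal_cylinder s) x)%:E))%E.
  rewrite [RHS](bigD1 [ffun i => x.2 (phi i)]) //= [X in (_ + X)%E]big1 ?adde0.
    rewrite indicE mem_set; last by move=> i; rewrite ffunE.
    by rewrite mule1 /F; congr (_%:E); apply: eq_bigr => i _; rewrite ffunE.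
  move=> s hs; rewrite indicE memNset ?mule0 // => H; move/negP: hs; apply.
  by apply/eqP/ffunP => i; rewrite ffunE H.
under eq_integral do rewrite split_cyl.
rewrite ge0_integral_sum //; first last.
- by move=> s x _; rewrite -EFinM lee_fin mulr_ge0 // indicE.
- by move=> s; apply: measurable_funeM.
rewrite (eq_bigr (fun s => (F s * \prod_(i < n) (if s i then theta else 1 - theta))%:E));
  last first.
  move=> s _; rewrite ge0_integralZl_EFin // integral_indic ?setIT //.
    by rewrite EFinM; congr (_ * _)%E; exact: PD_renewal_cylinder.
  exact: measurable_renewal_cylinder.
rewrite sumEFin; congr (_%:E).
have -> : (theta * a + (1 - theta) * b) ^+ n = \prod_(i < n) \sum_(c : bool)
    ((if c then a else b) * (if c then theta else 1 - theta)).
  by rewrite prodr_const card_ord big_bool /=; congr (_ ^+ _); ring.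
by rewrite bigA_distr_bigA; apply: eq_bigr => s _; rewrite /F -big_split.
Qed.

End RenewalCylinders.

Section DkOscillation.
Variables (R : realType) (A : countType) (d : measure_display) (Omega : measurableType d).
Variables (POm : probability Omega R) (theta : R) (PD : probability (Dtype Omega) R).
Hypothesis PD_prod : is_product_measure POm theta PD.
Variables (xi p : R) (An : nat -> Omega -> A).
Hypotheses (xi_ge0 : 0 <= xi) (xi_le1 : xi <= 1) (p_ge1 : 1 <= p).

Local Notation Dk_oscillation k x :=
  (ereal_sup [set ((dDelta xi (gmap An x) (gmap An x')) `^ p)%:E | x' in Dk k x]).

Lemma integral_Dk_oscillation_le (k : int) (f : Dt Omega -> R) : (forall x, 0 <= f x) ->
  (forall x x', Dk k x x' -> dDelta xi (gmap An x) (gmap An x') <= f x) ->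
  (\int[PD]_(x in [set: Dtype Omega]) Dk_oscillation k x
   <= \int[PD]_(x in [set: Dtype Omega]) (f x)%:E)%E.
Proof.
move=> f0 df; apply: ge0_le_integralT => x.
  apply: le_trans (ereal_sup_ubound _); last by exists x => //.
  by rewrite lee_fin powR_ge0.
apply: ge_ereal_sup => _ [x' x'_Dk <-]; rewrite lee_fin.
apply: le_trans (df _ _ x'_Dk).
by apply: powR_le_self => //; [exact: dDelta_ge0 | exact: dDelta_le1].
Qed.

Lemma integral_Dk_oscillation_pos (k : int) : 0 < k ->
  (\int[PD]_(x in [set: Dtype Omega]) Dk_oscillation k x
   <= ((theta * xi + (1 - theta) * 1) ^+ `|k|%N.-1)%:E)%E.
Proof.
move=> k0; have phi_inj : injective (fun i : 'I_`|k|%N.-1 => 0 + i.+1%:Z).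
  by move=> i j /= ij; apply: ord_inj; lia.
rewrite -(integral_renewal_product PD_prod phi_inj) //.
apply: integral_Dk_oscillation_le => [x|x x' x'_Dk].
  by apply: prodr_ge0 => i _; case: ifP.
by have := dDelta_gmap_Dk_le An x'_Dk xi_ge0 xi_le1 k0; rewrite /renewal_weight.
Qed.

Lemma integral_Dk_oscillation_nonpos (k : int) : k <= 0 ->
  (\int[PD]_(x in [set: Dtype Omega]) Dk_oscillation k x
   <= ((theta * 0 + (1 - theta) * 1) ^+ `|k|%N)%:E)%E.
Proof.
move=> k0; have phi_inj : injective (fun i : 'I_`|k|%N => - (i : int)).
  by move=> i j /= ij; apply: ord_inj; lia.
rewrite -(integral_renewal_product PD_prod phi_inj) //.
apply: integral_Dk_oscillation_le => [x|x x' x'_Dk].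
  by apply: prodr_ge0 => i _; case: ifP.
have [renewal|no_renewal] := pselect (exists j, k < j /\ j <= 0 /\ x.2 j).
  rewrite (gmap_Dk_eq An x'_Dk k0 renewal) dDeltaxx.
  by apply: prodr_ge0 => i _; case: ifP.
rewrite big1 ?dDelta_le1 // => i _; case: ifP => // zi; exfalso.
by apply: no_renewal; exists (- (i : int)); have := ltn_ord i; split; [lia | split].
Qed.

End DkOscillation.

Theorem proposition5p1
  (R : realType)
  (A : countType) (pA : A -> R) (hA : A -> nat) (xi theta p : R)
  (pA_ge0 : forall a, 0 <= pA a)
  (pA_sum1 : (\esum_(a in [set: A]) (pA a)%:E)%E = 1%E)
  (hA_pos : forall a, (0 < hA a)%N)
  (hA_int : (\esum_(a in [set: A]) ((hA a)%:R * pA a)%:E < +oo)%E)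
  (xi_gt0 : 0 < xi) (xi_lt1 : xi < 1)
  (theta_gt0 : 0 < theta) (theta_lt1 : theta < 1)
  (h_geom : forall n : nat, (0 < n)%N ->
     (\esum_(a in [set a | hA a = n]) (pA a)%:E)%E
       = (theta * (1 - theta) ^+ n.-1)%:E)
  (d : measure_display) (Omega : measurableType d) (POm : probability Omega R)
  (An : nat -> Omega -> A)
  (An_meas : forall n a, measurable (An n @^-1` [set a]))
  (An_law : forall n : nat, (0 < n)%N -> forall a : A,
     POm (An n @^-1` [set a]) =
       (if hA a == n then pA a / PA_h pA hA n else 0)%:E)
  (PD : probability (Dtype Omega) R)
  (PD_prod : is_product_measure POm theta PD)
  (p_gt2 : 2 < p) :
  exists Cd : R, exists thd : R, 0 < Cd /\ 0 < thd /\ thd < 1 /\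
    forall k : int,
      (\int[PD]_(x in [set: Dtype Omega])
          ereal_sup [set ((dDelta xi (gmap An x) (gmap An x')) `^ p)%:E
                     | x' in Dk k x]
       <= (Cd * thd ^+ `|k|%N)%:E)%E.
Proof.
have xi_ge0 : 0 <= xi by exact: ltW.
have xi_le1 : xi <= 1 by exact: ltW.
have p_ge1 : 1 <= p by lra.
set q := theta * xi + (1 - theta) * 1.
have q_gt0 : 0 < q by rewrite /q; nra.
have q_lt1 : q < 1 by rewrite /q; nra.
exists q^-1, q; split; first by rewrite invr_gt0.
split=> //; split=> // k; have [k_gt0|k_le0] := ltP 0 k.
  apply: le_trans (integral_Dk_oscillation_pos PD_prod An xi_ge0 xi_le1 p_ge1 k_gt0) _.
  by rewrite lee_fin -/q {2}(_ : `|k|%N = (`|k|.-1).+1) ?exprS ?mulKf ?gt_eqF //; lia.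
apply: le_trans (integral_Dk_oscillation_nonpos PD_prod An xi_ge0 xi_le1 p_ge1 k_le0) _.
rewrite lee_fin mulr0 add0r mulr1; apply: le_trans (ler_peMl _ _).
- by apply: lerXn2r; rewrite ?nnegrE /q; nra.
- exact/exprn_ge0/ltW.
- by rewrite invr_ge1 ?unitfE ?gt_eqF // ltW.
Qed.
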